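(* Let $p(C_1),\dots,p(C_K)>0$ be probabilities summing to $1$ and let $\mathcal E=-\sum_{j=1}^K p(C_j)\log p(C_j)$. Let $\{t_1,\dots,t_n\}$ be partitioned into $K$ nonempty clusters $C_1,\dots,C_K$ with sizes $n_j$, $n_{\min}=\min_j n_j$, $\bar p(C_j)=n_j/n$, and let $g^{\mathrm{True}}\in\{0,1\}^{n\times K}$ with $g^{\mathrm{True}}_{ij}=1$ iff $t_i\in C_j$. Let $g\in\{0,1\}^{n\times K}$ have exactly one entry $1$ in each row, $\hat p(C_j)=\frac1n\sum_i g_{ij}$, $\hat{\mathcal E}=-\sum_j \hat p(C_j)\log\hat p(C_j)$ (with $0\log 0=0$), and $M_{\mathrm{error}}=\sum_{j}\sum_{i}\mathbb I(g_{ij}\ne g^{\mathrm{True}}_{ij})$. Suppose there exists $0<c_2<1$ with $2Kn_{\min}/n\ge c_2$. Then $$|\mathcal E-\hat{\mathcal E}|\le \sum_{j=1}^K\left(\left|\frac{p(C_j)-\bar p(C_j)}{p(C_j)}\right|+\log\!\left(\frac{1}{p(C_j)}\right)\left|p(C_j)-\bar p(C_j)\right|\right)+h\!\left(\frac{2K}{c_2}\right)\left|\frac1n M_{\mathrm{error}}\right|,$$ where $h(x)=x+\log x$.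
   Context: $\mathcal E$ is the true entropy of the cluster distribution, $\bar p$ the empirical cluster proportions, and $\hat{\mathcal E}$ the entropy from an estimated clustering whose cluster labels are aligned with the true ones. *)

From mathcomp Require Import all_boot all_order all_algebra.
From mathcomp Require Import all_classical all_reals all_analysis.
Set Implicit Arguments. Unset Strict Implicit. Unset Printing Implicit Defensive.
Import Order.TTheory GRing.Theory Num.Theory.
Local Open Scope ring_scope.

Definition xlnx {R : realType} (x : R) : R := if x == 0 then 0 else x * ln x.

Definition entropy {R : realType} {K : nat} (q : 'I_K -> R) : R :=
  - \sum_(j < K) xlnx (q j).

Definition csize {n K : nat} (lab : 'I_n -> 'I_K) (j : 'I_K) : nat :=
  #|[set i | lab i == j]|.

(* n_min = min_j n_j (each n_j <= n, so n is a neutral start value) *)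
Definition nmin {n K : nat} (lab : 'I_n -> 'I_K) : nat :=
  \big[minn/n]_(j < K) csize lab j.

Definition pbar {R : realType} {n K : nat} (lab : 'I_n -> 'I_K) (j : 'I_K) : R :=
  (csize lab j)%:R / n%:R.

Definition gtrue {n K : nat} (lab : 'I_n -> 'I_K) (i : 'I_n) (j : 'I_K) : bool :=
  lab i == j.

Definition phat {R : realType} {n K : nat} (g : 'I_n -> 'I_K -> bool) (j : 'I_K) : R :=
  (\sum_(i < n) (g i j : nat)%:R) / n%:R.

Definition Merror {n K : nat} (lab : 'I_n -> 'I_K) (g : 'I_n -> 'I_K -> bool) : nat :=
  \sum_(j < K) \sum_(i < n) (g i j != gtrue lab i j : nat).

Definition hfun {R : realType} (x : R) : R := x + ln x.

From mathcomp Require Import all_boot all_order all_algebra.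
From mathcomp Require Import all_classical all_reals all_analysis.
From mathcomp Require Import lra.
Import Order.TTheory GRing.Theory Num.Theory.
Local Open Scope ring_scope.

(* The entropy gap splits through the empirical proportions pbar:
   |E(p) - E(phat)| <= |E(p) - E(pbar)| + |E(pbar) - E(phat)|.  Both terms are
   controlled by a one-sided Lipschitz estimate for x log x at a point x > 0,
   |x log x - y log y| <= (1/x + log(1/x)) |x - y|  for x, y in [0, 1],
   which follows from x log x - y log y = (x - y) log x + y (log x - log y)
   and log u - log v <= (u - v)/v.  For the second term x = pbar_j is at least
   n_min / n >= c2 / (2K), so the constant is at most h(2K/c2), while
   |pbar_j - phat_j| is at most the number of errors in column j divided by n. *)

Section XlnxLipschitz.
Context {R : realType}.

Lemma ln_sub_le_div (u v : R) : 0 < u -> 0 < v -> ln u - ln v <= (u - v) / v.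
Proof.
move=> u_gt0 v_gt0; rewrite -ln_div ?posrE // mulrBl divff ?gt_eqF //.
have uv_gt0 : 0 < u / v by rewrite divr_gt0.
by have := @le_ln1Dx R (u / v - 1); rewrite addrCA subrr addr0; apply; lra.
Qed.

Lemma xlnx_sub_le {x y : R} : 0 < x -> x <= 1 -> 0 <= y -> y <= 1 ->
  `|xlnx x - xlnx y| <= `|x - y| / x + ln (1 / x) * `|x - y|.
Proof.
move=> x_gt0 x_le1 y_ge0 y_le1.
have dist_div : `|x - y| <= `|x - y| / x.
  by rewrite ler_pdivlMr // ler_piMr.
have mixed : `|y * ln x - xlnx y| <= `|x - y| / x.
  rewrite /xlnx; have [->|y_neq0] := eqVneq y 0.
    by rewrite mul0r subrr normr0 divr_ge0 // ltW.
  have y_gt0 : 0 < y by rewrite lt0r y_neq0.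
  rewrite -mulrBr ler_norml; apply/andP; split.
    rewrite lerNl -mulrN opprB.
    apply: le_trans (_ : y * ((y - x) / x) <= _).
      by rewrite ler_pM2l // ln_sub_le_div.
    apply: le_trans (_ : y * (`|x - y| / x) <= _).
      by rewrite ler_pM2l // ler_pM2r ?invr_gt0 // distrC ler_norm.
    by rewrite ler_piMl // divr_ge0 // ltW.
  have : y * (ln x - ln y) <= y * ((x - y) / y).
    by rewrite ler_pM2l // ln_sub_le_div.
  rewrite mulrCA divff ?mulr1 // => le_xy.
  exact: le_trans le_xy (le_trans (ler_norm _) dist_div).
have -> : xlnx x - xlnx y = (x - y) * ln x + (y * ln x - xlnx y).
  by rewrite {1}/xlnx gt_eqF // mulrBl addrA subrK.
have ln_inv : ln (1 / x) = - ln x by rewrite div1r lnV ?posrE.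
apply: le_trans (ler_normD _ _) _.
rewrite normrM (ler0_norm (ln_le0 x_le1)) ln_inv mulrC addrC.
exact: lerD.
Qed.

Lemma xlnx_sub_le_hfun {a x y : R} :
  0 < a -> a <= x -> x <= 1 -> 0 <= y -> y <= 1 ->
  `|xlnx x - xlnx y| <= hfun a^-1 * `|x - y|.
Proof.
move=> a_gt0 a_le_x x_le1 y_ge0 y_le1.
have x_gt0 : 0 < x := lt_le_trans a_gt0 a_le_x.
apply: le_trans (xlnx_sub_le x_gt0 x_le1 y_ge0 y_le1) _.
rewrite /hfun mulrDl mulrC div1r.
apply: lerD; apply: ler_wpM2r => //; first by rewrite lef_pV2 ?posrE.
by rewrite ler_ln ?posrE ?invr_gt0 // lef_pV2 ?posrE.
Qed.

Lemma hfun_inv_ge0 (a : R) : 0 < a -> a <= 1 -> 0 <= hfun a^-1.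
Proof.
move=> a_gt0 a_le1; apply: addr_ge0; first by rewrite invr_ge0 ltW.
by rewrite ln_ge0 // invf_ge1.
Qed.

Lemma entropy_sub_le {K : nat} (q r : 'I_K -> R) :
  `|entropy q - entropy r| <= \sum_(j < K) `|xlnx (q j) - xlnx (r j)|.
Proof.
rewrite /entropy opprK addrC -sumrB; apply: le_trans (ler_norm_sum _ _ _) _.
by apply: ler_sum => j _; rewrite distrC.
Qed.

Lemma distr_natb (b c : bool) : `|(b : nat)%:R - (c : nat)%:R| = (b != c : nat)%:R :> R.
Proof. by case: b; case: c; rewrite ?subrr ?normr0 ?subr0 ?sub0r ?normrN ?normr1. Qed.

End XlnxLipschitz.

Definition Merror_col {n K : nat} (lab : 'I_n -> 'I_K) (g : 'I_n -> 'I_K -> bool)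
    (j : 'I_K) : nat :=
  \sum_(i < n) (g i j != gtrue lab i j : nat).

Section Clusters.
Context {R : realType} {n K : nat} (lab : 'I_n -> 'I_K).

Lemma nmin_le_csize j : (nmin lab <= csize lab j)%N.
Proof. by rewrite /nmin -minEnat; exact: (bigmin_le (T := nat)). Qed.

Lemma natr_csize j : (csize lab j)%:R = \sum_(i < n) (lab i == j : nat)%:R :> R.
Proof.
rewrite /csize -sum1_card natr_sum big_mkcond /=; apply: eq_bigr => i _.
by rewrite inE; case: (lab i == j).
Qed.

Lemma nmin_div_le_pbar j : (nmin lab)%:R / n%:R <= pbar lab j :> R.
Proof. by apply: ler_wpM2r; rewrite ?invr_ge0 // ler_nat nmin_le_csize. Qed.

Lemma pbar_ge0 j : 0 <= pbar lab j :> R.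
Proof. by rewrite divr_ge0. Qed.

Lemma div_le_pbar {c : R} j :
  c <= (2 * K)%:R * (nmin lab)%:R / n%:R -> c / (2 * K)%:R <= pbar lab j.
Proof.
have K_gt0 : (0 < K)%N := leq_ltn_trans (leq0n j) (ltn_ord j).
move=> c_le; apply: le_trans (nmin_div_le_pbar j).
by rewrite mulrC ler_pdivrMl ?ltr0n ?muln_gt0 // mulrA.
Qed.

Lemma pbar_le1 j : (0 < n)%N -> pbar lab j <= 1 :> R.
Proof.
move=> n_gt0; rewrite ler_pdivrMr ?ltr0n // mul1r ler_nat.
by rewrite -[n in (_ <= n)%N]card_ord max_card.
Qed.

Lemma phat_ge0 (g : 'I_n -> 'I_K -> bool) j : 0 <= phat g j :> R.
Proof. by rewrite divr_ge0 // sumr_ge0. Qed.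

Lemma phat_le1 (g : 'I_n -> 'I_K -> bool) j : (0 < n)%N -> phat g j <= 1 :> R.
Proof.
move=> n_gt0; rewrite ler_pdivrMr ?ltr0n // mul1r.
rewrite -[n in n%:R]card_ord -sumr_const ler_sum // => i _.
by case: (g i j).
Qed.

Lemma dist_pbar_phat (g : 'I_n -> 'I_K -> bool) j :
  `|pbar lab j - phat g j| <= (Merror_col lab g j)%:R / n%:R :> R.
Proof.
rewrite /pbar /phat natr_csize -mulrBl normrM normfV normr_nat.
apply: ler_wpM2r; first by rewrite invr_ge0.
rewrite -sumrB natr_sum.
apply: le_trans (ler_norm_sum _ _ _) _; apply: ler_sum => i _.
by rewrite distr_natb /gtrue eq_sym.
Qed.

Lemma sum_Merror_col (g : 'I_n -> 'I_K -> bool) :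
  \sum_(j < K) (Merror_col lab g j)%:R / n%:R = (Merror lab g)%:R / n%:R :> R.
Proof. by rewrite -mulr_suml -natr_sum. Qed.

End Clusters.

Theorem lemma4 (R : realType) (K n : nat) (p : 'I_K -> R)
  (lab : 'I_n -> 'I_K) (g : 'I_n -> 'I_K -> bool) (c2 : R) :
  (forall j, 0 < p j) ->
  \sum_(j < K) p j = 1 ->
  (forall j, exists i, lab i = j) ->
  (forall i, #|[set j | g i j]| = 1%N) ->
  0 < c2 -> c2 < 1 ->
  c2 <= (2 * K)%:R * (nmin lab)%:R / n%:R ->
  `| entropy p - entropy (phat g) | <=
    \sum_(j < K) (`| (p j - pbar lab j) / p j |
                  + ln (1 / p j) * `| p j - pbar lab j |)
    + hfun ((2 * K)%:R / c2) * `| (Merror lab g)%:R / n%:R |.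
Proof.
(* The bound holds without c2 < 1, the surjectivity of lab or the one-hot rows of g. *)
move=> p_gt0 p_sum _ _ c2_gt0 _ c2_le.
have n_gt0 : (0 < n)%N.
  rewrite lt0n; apply: contraTneq (lt_le_trans c2_gt0 c2_le).
  move=> /(congr1 (GRing.natmul (1 : R))) ->.
  by rewrite mulr0n invr0 mulr0 ltxx.
have p_le1 j : p j <= 1.
  by rewrite -p_sum (bigD1 j) //= lerDl sumr_ge0 // => i _; apply: ltW.
set a := c2 / (2 * K)%:R.
have a_le_pbar j : a <= pbar lab j := div_le_pbar lab j c2_le.
have a_gt0 (j : 'I_K) : 0 < a.
  by rewrite divr_gt0 // ltr0n muln_gt0 (leq_ltn_trans (leq0n j) (ltn_ord j)).
rewrite -[(2 * K)%:R / c2]invf_div -/a [X in _ * X]ger0_norm ?divr_ge0 //.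
rewrite -sum_Merror_col mulr_sumr.
apply: le_trans (ler_distD (entropy (pbar lab)) _ _) _; apply: lerD.
  apply: le_trans (entropy_sub_le _ _) _; apply: ler_sum => j _.
  rewrite normrM normfV (gtr0_norm (p_gt0 j)).
  exact: xlnx_sub_le (p_gt0 j) (p_le1 j) (pbar_ge0 lab j) (pbar_le1 lab j n_gt0).
apply: le_trans (entropy_sub_le _ _) _; apply: ler_sum => j _.
have pbar_j_le1 : pbar lab j <= 1 :> R := pbar_le1 lab j n_gt0.
apply: le_trans (xlnx_sub_le_hfun (a_gt0 j) (a_le_pbar j) pbar_j_le1
  (phat_ge0 g j) (phat_le1 g j n_gt0)) _.
rewrite ler_wpM2l ?dist_pbar_phat //.
exact: hfun_inv_ge0 (a_gt0 j) (le_trans (a_le_pbar j) pbar_j_le1).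
Qed.
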